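(* Let Assumptions (A1) and (A3) below hold. Then there exists $\alpha_1\in\mathcal K_\infty$ such that for all $\varepsilon>0$, all $T\in\mathbb{N}$, all $\hat x\in\mathbb{X}$ and all $\hat u\in\mathbb{U}^T(\hat x)$ with $\|(x_{\hat u}(k,\hat x),\hat u(k))\|_{\Pi^\star}\le\varepsilon$ for all $k\in\{0,\dots,T-1\}$, $$\sum_{k=0}^{T-1}\ell(x_{\hat u}(k,\hat x),\hat u(k))\le(T+p^\star-1)\ell^\star+T\alpha_1(\varepsilon).$$
   Context: System $x(k+1)=f(x(k),u(k))$ with constraint sets $\mathbb{X}\subset\mathbb{R}^n$, $\mathbb{U}\subset\mathbb{R}^m$ and stage cost $\ell:\mathbb{X}\times\mathbb{U}\to\mathbb{R}$, which is assumed non-negative. For $u\in\mathbb{U}^T$, $x_u(0,x)=x$, $x_u(k+1,x)=f(x_u(k,x),u(k))$; $\mathbb{U}^T(x)$ is the set of $u\in\mathbb{U}^T$ with $x_u(k,x)\in\mathbb{X}$ for $k=0,\dots,T$. A feasible $p$-periodic orbit is $\Pi\in(\mathbb{X}\times\mathbb{U})^p$ with $\Pi_\mathbb{X}([k+1]_p)=f(\Pi(k))$ ($[k]_p$ = $k$ mod $p$); $\|(x,u)\|_\Pi:=\min_k\|(x,u)-\Pi(k)\|$; $\ell^\star:=\inf$ over all feasible periodic orbits of $\frac1p\sum_{k=0}^{p-1}\ell(\Pi(k))$; $\Pi^\star$ is a fixed feasible $p^\star$-periodic orbit attaining $\ell^\star$. (A1) $f,\ell$ continuous, $\mathbb{X},\mathbb{U}$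 compact. (A3) There are $\lambda:\mathbb{X}\to\mathbb{R}$, $\bar\lambda$ with $|\lambda|\le\bar\lambda$ on $\mathbb{X}$, and $\underline\alpha_{\tilde\ell}\in\mathcal K_\infty$ with $\ell(x,u)-\ell^\star+\lambda(x)-\lambda(f(x,u))\ge\underline\alpha_{\tilde\ell}(\|(x,u)\|_{\Pi^\star})$ for all $x\in\mathbb{X}$, $u\in\mathbb{U}^1(x)$. *)

From HB Require Import structures.
From mathcomp Require Import all_boot all_order all_algebra.
From mathcomp Require Import all_classical all_reals all_analysis.
Set Implicit Arguments. Unset Strict Implicit. Unset Printing Implicit Defensive.
Import Order.TTheory GRing.Theory Num.Theory.
Import numFieldNormedType.Exports.
Local Open Scope classical_set_scope.
Local Open Scope ring_scope.

Section Defs.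
Variables (R : realType) (n m : nat).
Local Notation st := 'rV[R]_n.
Local Notation inp := 'rV[R]_m.

Definition Kinf (a : R -> R) : Prop :=
  [/\ a 0 = 0,
      {within `[0, +oo[%classic, continuous a},
      {in `[0, +oo[ &, forall s t, s < t -> a s < a t} &
      (forall M : R, exists s, 0 <= s /\ M <= a s)].

Fixpoint traj (f : st -> inp -> st) (u : nat -> inp) (x : st) (k : nat) : st :=
  match k with
  | 0 => x
  | k'.+1 => f (traj f u x k') (u k')
  end.

Definition admissible (f : st -> inp -> st) (X : set st) (U : set inp)
  (T : nat) (x : st) (u : nat -> inp) : Prop :=
  (forall k, (k < T)%N -> U (u k)) /\ (forall k, (k <= T)%N -> X (traj f u x k)).

(* feasible p-periodic orbit Pi(0), ..., Pi(p-1) (only indices < p matter) *)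
Definition feas_orbit (f : st -> inp -> st) (X : set st) (U : set inp)
  (p : nat) (Pi : nat -> st * inp) : Prop :=
  (0 < p)%N /\
  (forall k, (k < p)%N -> X (Pi k).1 /\ U (Pi k).2) /\
  (forall k, (k < p)%N -> (Pi ((k.+1) %% p)%N).1 = f (Pi k).1 (Pi k).2).

Definition avg_cost (ell : st -> inp -> R) (p : nat) (Pi : nat -> st * inp) : R :=
  p%:R^-1 * \sum_(k < p) ell (Pi k).1 (Pi k).2.

Definition ell_star (f : st -> inp -> st) (X : set st) (U : set inp)
  (ell : st -> inp -> R) : R :=
  inf [set r | exists p Pi, feas_orbit f X U p Pi /\ r = avg_cost ell p Pi].

Definition pnorm (x : st) (u : inp) : R := `| row_mx x u |.

Definition orbit_dist (p : nat) (Pi : nat -> st * inp) (x : st) (u : inp) : R :=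
  \big[Num.min/pnorm (x - (Pi 0%N).1) (u - (Pi 0%N).2)]_(k < p)
     pnorm (x - (Pi k).1) (u - (Pi k).2).

End Defs.

From HB Require Import structures.
From mathcomp Require Import all_boot all_order all_algebra.
From mathcomp Require Import all_classical all_reals all_analysis.
From mathcomp Require Import lra.
Set Implicit Arguments.
Unset Strict Implicit.
Unset Printing Implicit Defensive.
Import Order.TTheory GRing.Theory Num.Theory.
Import numFieldNormedType.Exports.
Local Open Scope classical_set_scope.
Local Open Scope ring_scope.

(* Summed over one period, the dissipation inequality of (A3) along the optimal
   orbit is an equality, hence it is an equality at every orbit point: there the
   stage cost is ell^star plus the increment of the storage lam, whose
   oscillation over the orbit is at most (p^star - 1) ell^star.  A trajectory
   that stays eps-close to the orbit, for eps below a radius given by the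
   continuity of f and the separation of the orbit states, follows the orbit
   state by state, so its cost is that of an orbit segment plus T times a
   continuous modulus of ell around the orbit.  For larger eps the crude bound
   T max ell is absorbed by a linear term, which also makes the modulus of
   class K_infinity. *)

Section PairNorm.
Variables (R : realType) (n m : nat).

Lemma norml_le_pnorm (x : 'rV[R]_n) (u : 'rV[R]_m) : `|x| <= pnorm x u.
Proof.
rewrite /pnorm -[`|_|]/(mx_norm _) -[`|row_mx _ _|]/(mx_norm _) !mx_normrE.
apply: bigmax_le => [|[i j] _ /=].
  exact: bigmax_ge_id.
rewrite -(row_mxEl x u).
exact: (le_bigmax _ (fun ij : 'I_1 * 'I_(n + m) => `|row_mx x u ij.1 ij.2|) (i, lshift m j)).
Qed.

Lemma normr_le_pnorm (x : 'rV[R]_n) (u : 'rV[R]_m) : `|u| <= pnorm x u.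
Proof.
rewrite /pnorm -[`|_|]/(mx_norm _) -[`|row_mx _ _|]/(mx_norm _) !mx_normrE.
apply: bigmax_le => [|[i j] _ /=].
  exact: bigmax_ge_id.
rewrite -(row_mxEr x u).
exact: (le_bigmax _ (fun ij : 'I_1 * 'I_(n + m) => `|row_mx x u ij.1 ij.2|) (i, rshift n j)).
Qed.

Lemma within_continuous_pnorm_ball (W : normedModType R)
    (X : set 'rV[R]_n) (U : set 'rV[R]_m) (g : 'rV[R]_n * 'rV[R]_m -> W) w e :
  {within X `*` U, continuous g} -> X w.1 -> U w.2 -> 0 < e ->
  exists2 d, 0 < d & forall x u, X x -> U u ->
    pnorm (x - w.1) (u - w.2) < d -> `|g (x, u) - g w| < e.
Proof.
move=> /subspace_continuousP g_cont Xw Uw e_gt0.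
have /cvgrPdist_lt/(_ e e_gt0)/nbhs_normP[d d_gt0 near_w] := g_cont w (conj Xw Uw).
exists d => // x u Xx Uu xu_near; rewrite distrC.
apply: (near_w (x, u)) => //=.
rewrite -normrN opprB prod_normE /= gt_max.
by rewrite !(le_lt_trans _ xu_near) ?norml_le_pnorm ?normr_le_pnorm.
Qed.

End PairNorm.

Lemma common_pos_radius (R : realDomainType) (N : nat) (P : nat -> R -> Prop) :
  (forall i d d', 0 < d' -> d' <= d -> P i d -> P i d') ->
  (forall i, (i < N)%N -> exists2 d, 0 < d & P i d) ->
  exists2 d, 0 < d & forall i, (i < N)%N -> P i d.
Proof.
move=> P_down; elim: N => [|N IH] P_ex; first by exists 1.
have [d d_gt0 Pd] := IH (fun i iN => P_ex i (ltnW iN)).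
have [d' d'_gt0 Pd'] := P_ex N (ltnSn N).
have dd'_gt0 : 0 < Num.min d d' by rewrite lt_min d_gt0 d'_gt0.
exists (Num.min d d') => // i; rewrite ltnS leq_eqVlt => /orP[/eqP -> | iN].
  by apply: P_down Pd'; rewrite // ge_min lexx orbT.
by apply: P_down (Pd i iN); rewrite // ge_min lexx.
Qed.

Lemma finite_points_separated (R : realType) (V : normedModType R) (N : nat)
    (z : nat -> V) :
  exists2 d, 0 < d & forall a, (a < N)%N -> forall b, (b < N)%N ->
    z a != z b -> d <= `|z a - z b|.
Proof.
apply: (@common_pos_radius R N (fun a d => forall b, (b < N)%N ->
  z a != z b -> d <= `|z a - z b|)) => [a d d' _ d'd sep_d b bN zab | a aN].
  exact: le_trans d'd (sep_d b bN zab).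
apply: (@common_pos_radius R N (fun b d =>
  z a != z b -> d <= `|z a - z b|)) => [b d d' _ d'd sep_d zab | b bN].
  exact: le_trans d'd (sep_d zab).
have [-> | zab] := eqVneq (z a) (z b); first by exists 1; rewrite ?eqxx.
by exists `|z a - z b|; rewrite ?normr_gt0 ?subr_eq0.
Qed.

Lemma compact_within_continuous_ub (R : realType) (T : topologicalType)
    (K : set T) (g : T -> R) :
  compact K -> {within K, continuous g} -> exists L, forall z, K z -> g z <= L.
Proof.
move=> K_compact g_cont.
have [M [_ M_bound]] := compact_bounded (continuous_compact g_cont K_compact).
exists (`|M| + 1) => z Kz.
have M_lt : M < `|M| + 1 by have := ler_norm M; lra.
by apply: le_trans (ler_norm _) (M_bound _ M_lt _ (ex_intro2 _ _ z Kz erefl)).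
Qed.

Lemma min1_mull_le (R : realDomainType) (r a : R) :
  1 <= r -> Num.min 1 (r * a) <= r * Num.min 1 a.
Proof.
move=> r_ge1; have [a_le1 | a_gt1] := lerP a 1.
  by rewrite ge_min ler_wpM2l ?ge_min ?lexx ?orbT //; apply: le_trans r_ge1.
by rewrite mulr1 ge_min r_ge1.
Qed.

Section Modulus.
Variables (R : realType) (T : Type) (S : set T) (dev dist : T -> R) (L : R).
Hypothesis dist_ge0 : forall t, 0 <= dist t.
Hypothesis dev_le : forall t, S t -> dev t <= L.
Hypothesis dev_small : forall eta, 0 < eta ->
  exists2 d, 0 < d & forall t, S t -> dist t < d -> dev t <= eta.

(* The factor [min 1 (e / dist t)] makes [modulus e / e] nonincreasing in
   [e > 0]; together with monotonicity this yields continuity.  For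
   [dist t = 0] the term is [0], as [e / 0 = 0]. *)
Definition modulus_term (e : R) (t : T) : R :=
  Num.max 0 (dev t) * Num.min 1 (e / dist t).

Definition modulus (e : R) : R := sup (0 |` modulus_term e @` S).

Local Notation B := (Num.max 0 L).

Lemma modulus_term_le e t : S t -> modulus_term e t <= B.
Proof.
move=> St; have a_ge0 : 0 <= Num.max 0 (dev t) by rewrite le_max lexx.
apply: le_trans (ler_piMr a_ge0 _) _; first by rewrite ge_min lexx.
by rewrite ge_max le_max lexx le_max (dev_le St) orbT.
Qed.

Lemma has_sup_modulus e : has_sup (0 |` modulus_term e @` S).
Proof.
split; first by exists 0; left.
exists B => r [-> | [t St <-]]; last exact: modulus_term_le.
by rewrite le_max lexx.
Qed.

Lemma modulus_term_le_modulus e t : S t -> modulus_term e t <= modulus e.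
Proof. by move=> St; apply: sup_upper_bound (has_sup_modulus e) _ _; right; exists t. Qed.

Lemma modulus_ge0 e : 0 <= modulus e.
Proof. by apply: sup_upper_bound (has_sup_modulus e) _ _; left. Qed.

Lemma modulus_le_bound e M : 0 <= M ->
  (forall t, S t -> modulus_term e t <= M) -> modulus e <= M.
Proof.
move=> M_ge0 M_ub; apply: ge_sup; first by exists 0; left.
by move=> r [-> | [t St <-]]; last exact: M_ub.
Qed.

Lemma modulus_le e : modulus e <= B.
Proof. by apply: modulus_le_bound; rewrite ?le_max ?lexx //; apply: modulus_term_le. Qed.

Lemma modulus_eq0 e : e <= 0 -> modulus e = 0.
Proof.
move=> e_le0; apply/eqP; rewrite eq_le modulus_ge0 andbT.
apply: modulus_le_bound => // t _; apply: mulr_ge0_le0; first by rewrite le_max lexx.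
by rewrite ge_min mulr_le0_ge0 ?invr_ge0 ?orbT.
Qed.

Lemma le_modulus : {homo modulus : x y / x <= y}.
Proof.
move=> x y xy; apply: modulus_le_bound => [|t St]; first exact: modulus_ge0.
apply: le_trans _ (modulus_term_le_modulus y St); apply: ler_wpM2l.
  by rewrite le_max lexx.
by rewrite le_min !ge_min lexx ler_wpM2r ?invr_ge0 ?orbT.
Qed.

Lemma modulus_scale x y : 0 < x -> x <= y -> modulus y <= y / x * modulus x.
Proof.
move=> x_gt0 xy; have yx_ge1 : 1 <= y / x by rewrite ler_pdivlMr // mul1r.
apply: modulus_le_bound => [|t St].
  by rewrite mulr_ge0 ?modulus_ge0 // (le_trans ler01).
apply: le_trans _ (ler_wpM2l (le_trans ler01 yx_ge1) (modulus_term_le_modulus x St)).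
rewrite /modulus_term mulrCA; apply: ler_wpM2l; first by rewrite le_max lexx.
by rewrite -[y in y / dist t](divfK (lt0r_neq0 x_gt0)) -(mulrA (y / x)) min1_mull_le.
Qed.

Lemma dev_le_modulus e t : S t -> dist t <= e -> dev t <= modulus e.
Proof.
move=> St dist_le; have [dist0 | dist_gt0] := eqVneq (dist t) 0.
  apply: le_trans (modulus_ge0 e); apply/ler_addgt0Pr => eta eta_gt0; rewrite add0r.
  have [d d_gt0 small] := dev_small eta_gt0.
  by rewrite (small t St) // dist0.
have dist_pos : 0 < dist t by rewrite lt_def dist_gt0 dist_ge0.
apply: le_trans _ (modulus_term_le_modulus e St).
rewrite /modulus_term (_ : Num.min 1 _ = 1); first by rewrite mulr1 le_max lexx orbT.
by apply/min_idPl; rewrite ler_pdivlMr // mul1r.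
Qed.

Lemma modulus_small eta : 0 < eta ->
  exists2 r, 0 < r & forall y, y <= r -> modulus y <= eta.
Proof.
move=> eta_gt0; have [d d_gt0 small] := dev_small eta_gt0.
have B_ge0 : 0 <= B by rewrite le_max lexx.
pose k := eta / (B + 1); have k_gt0 : 0 < k by rewrite divr_gt0 // ltr_wpDl.
exists (k * d) => [|y y_le]; first exact: mulr_gt0.
apply: modulus_le_bound (ltW eta_gt0) _ => t St; rewrite /modulus_term.
have a_ge0 : 0 <= Num.max 0 (dev t) by rewrite le_max lexx.
have [dist_lt | dist_ge] := ltP (dist t) d.
  apply: le_trans (ler_piMr a_ge0 _) _; first by rewrite ge_min lexx.
  by rewrite ge_max (ltW eta_gt0) small.
have dist_gt0 : 0 < dist t := lt_le_trans d_gt0 dist_ge.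
have min_le : Num.min 1 (y / dist t) <= k.
  by rewrite ge_min ler_pdivrMr // (le_trans y_le) ?orbT // ler_wpM2l // ltW.
have a_le : Num.max 0 (dev t) <= B by rewrite ge_max B_ge0 le_max (dev_le St) orbT.
apply: le_trans (ler_wpM2l a_ge0 min_le) _; apply: le_trans (ler_wpM2r (ltW k_gt0) a_le) _.
by rewrite /k mulrA ler_pdivrMr ?ltr_wpDl //; nra.
Qed.

Lemma modulus_lipschitz x y : 0 < x -> x <= y ->
  modulus y - modulus x <= (y - x) / x * B.
Proof.
move=> x_gt0 xy; have := modulus_scale x_gt0 xy.
have -> : y / x = 1 + (y - x) / x by rewrite mulrBl divff ?lt0r_neq0 // addrC subrK.
have : (y - x) / x * modulus x <= (y - x) / x * B.
  by rewrite ler_wpM2l ?modulus_le // divr_ge0 ?subr_ge0 // ltW.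
lra.
Qed.

Lemma modulus_continuous : continuous modulus.
Proof.
move=> x; apply/cvgrPdist_lt => e e_gt0.
have B_ge0 : 0 <= B by rewrite le_max lexx.
have [x_le0 | x_gt0] := lerP x 0.
  have [r r_gt0 small] := modulus_small (divr_gt0 e_gt0 (ltr0Sn _ 1)).
  apply/nbhs_normP; exists r => //= t /= xt.
  rewrite modulus_eq0 // sub0r normrN ger0_norm ?modulus_ge0 //.
  apply: le_lt_trans (small t _) _; last lra.
  by have := ler_norm (t - x); rewrite distrC in xt; lra.
pose d := Num.min (x / 2) (e * x / (2 * (B + 1))).
have d_gt0 : 0 < d by rewrite lt_min !divr_gt0 ?mulr_gt0 ?ltr_wpDl.
apply/nbhs_normP; exists d => //= t /= xt.
have xt_half : `|x - t| < x / 2 by apply: lt_le_trans xt _; rewrite ge_min lexx.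
have xt_e : `|x - t| * (2 * (B + 1)) < e * x.
  rewrite -ltr_pdivlMr ?mulr_gt0 ?ltr_wpDl //.
  by apply: lt_le_trans xt _; rewrite ge_min lexx orbT.
have [xt_le | tx_lt] := lerP x t.
  rewrite distrC ger0_norm ?subr_ge0 ?le_modulus //.
  apply: le_lt_trans (modulus_lipschitz x_gt0 xt_le) _.
  rewrite mulrAC ltr_pdivrMr //.
  rewrite distrC ger0_norm ?subr_ge0 // in xt_e; nra.
have t_gt0 : 0 < t by have := ler_norm (x - t); lra.
rewrite ger0_norm ?subr_ge0 ?le_modulus ?ltW //.
apply: le_lt_trans (modulus_lipschitz t_gt0 (ltW tx_lt)) _.
rewrite mulrAC ltr_pdivrMr //.
rewrite ger0_norm ?subr_ge0 ?ltW // in xt_e xt_half; nra.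
Qed.

End Modulus.

Lemma Kinf_ge0 (R : realType) (a : R -> R) t : Kinf a -> 0 <= t -> 0 <= a t.
Proof.
case=> a0 _ a_incr _ t_ge0; rewrite -a0.
have [-> | t_neq0] := eqVneq t 0; first by rewrite a0.
by apply/ltW/a_incr; rewrite ?in_itv /= ?lexx ?andbT // lt_def t_neq0.
Qed.

Lemma Kinf_add_linear (R : realType) (b : R -> R) (c : R) :
  continuous b -> {homo b : x y / x <= y} -> b 0 = 0 -> 0 < c ->
  Kinf (fun e => b e + c * e).
Proof.
move=> b_cont b_incr b0 c_gt0; split.
- by rewrite b0 mulr0 addr0.
- by apply: continuous_subspaceT => x; apply: continuousD (b_cont x) (@mulrl_continuous _ c x).
- move=> s t _ _ st; have := b_incr s t (ltW st).
  have : c * s < c * t by rewrite ltr_pM2l.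
  lra.
- move=> M; exists (Num.max 0 (M / c)); split; first by rewrite le_max lexx.
  have : 0 <= b (Num.max 0 (M / c)) by rewrite -{1}b0 b_incr // le_max lexx.
  have : M <= c * Num.max 0 (M / c) by rewrite -ler_pdivrMl // mulrC le_max lexx orbT.
  lra.
Qed.

Section OrbitDistance.
Variables (R : realType) (n m p : nat) (Pi : nat -> 'rV[R]_n * 'rV[R]_m).

Lemma orbit_dist_ge0 x u : 0 <= orbit_dist p Pi x u.
Proof.
apply: (big_ind (fun r => 0 <= r)) => [|a b a_ge0 b_ge0|i _]; last exact: normr_ge0.
  exact: normr_ge0.
by rewrite le_min a_ge0.
Qed.

Lemma orbit_dist_attained x u : (0 < p)%N ->
  exists2 i, (i < p)%N & pnorm (x - (Pi i).1) (u - (Pi i).2) = orbit_dist p Pi x u.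
Proof.
move=> p_gt0; rewrite /orbit_dist; elim/big_rec: _ => [|k r _ [i ip <-]].
  by exists 0%N.
by case: leP => _; [exists k | exists i].
Qed.

End OrbitDistance.

Lemma sum_mod_succ (V : nmodType) (p : nat) (g : nat -> V) :
  \sum_(i < p) g (i.+1 %% p)%N = \sum_(i < p) g i.
Proof. by rewrite [RHS](reindex_inj (@ordS_inj p)). Qed.

Lemma cyclic_dissipation_eq (R : realDomainType) (p : nat) (g h : nat -> R) (c : R) :
  \sum_(i < p) g i = p%:R * c ->
  (forall i, (i < p)%N -> c + h (i.+1 %% p)%N - h i <= g i) ->
  forall i, (i < p)%N -> g i = c + h (i.+1 %% p)%N - h i.
Proof.
move=> g_sum g_ge i ip.
pose E (j : 'I_p) := g j - (c + h (j.+1 %% p)%N - h j).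
have E_ge0 (j : 'I_p) : 0 <= E j by rewrite subr_ge0 g_ge.
have E_sum : \sum_(j < p) E j = 0.
  rewrite sumrB !big_split /= sumrN (sum_mod_succ p h) g_sum sumr_const card_ord.
  by rewrite -[c *+ p]mulr_natl; lra.
have := psumr_eq0P (fun j _ => E_ge0 j) E_sum (i := Ordinal ip) isT.
by rewrite /E /=; lra.
Qed.

Section CyclicStorage.
Variables (R : realDomainType) (p : nat) (g h : nat -> R) (c : R).
Hypothesis g_ge0 : forall i, (i < p)%N -> 0 <= g i.
Hypothesis c_ge0 : 0 <= c.
Hypothesis g_eq : forall i, (i < p)%N -> g i = c + h (i.+1 %% p)%N - h i.

Lemma cyclic_storage_drop a k : (a < p)%N -> h a - k%:R * c <= h ((a + k) %% p)%N.
Proof.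
move=> ap; have p_gt0 : (0 < p)%N := leq_ltn_trans (leq0n a) ap.
elim: k => [|k IH]; first by rewrite addn0 modn_small // mul0r subr0.
have := g_eq (ltn_pmod (a + k) p_gt0); have := g_ge0 (ltn_pmod (a + k) p_gt0).
rewrite -addn1 modnDml addn1 -addnS -natr1; lra.
Qed.

Lemma cyclic_storage_oscillation a b : (a < p)%N -> (b < p)%N ->
  h a - h b <= (p%:R - 1) * c.
Proof.
move=> ap bp; have p_gt0 : (0 < p)%N := leq_ltn_trans (leq0n a) ap.
pose k := ((b + p - a) %% p)%N.
have a_k : ((a + k) %% p)%N = b.
  rewrite modnDmr subnKC ?modnDr ?modn_small //.
  exact: leq_trans (ltnW ap) (leq_addl _ _).
have k_le : k%:R * c <= (p%:R - 1) * c.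
  by rewrite ler_wpM2r // lerBrDr natr1 ler_nat ltn_pmod.
have := cyclic_storage_drop k ap; rewrite a_k; lra.
Qed.

Lemma cyclic_chain_telescope K (idx : nat -> nat) :
  (forall k, (k <= K)%N -> (idx k < p)%N) ->
  (forall k, (k < K)%N -> h (idx k.+1) = h ((idx k).+1 %% p)%N) ->
  \sum_(k < K.+1) g (idx k) = K.+1%:R * c + h ((idx K).+1 %% p)%N - h (idx 0%N).
Proof.
elim: K => [|K IH] idx_lt chain.
  by rewrite big_ord1 g_eq ?idx_lt // mul1r.
rewrite big_ord_recr /= IH => [|k kK|k kK]; last by rewrite chain // ltnW.
- by rewrite g_eq ?idx_lt // chain // -natr1; lra.
- by rewrite idx_lt // ltnW.
Qed.

Lemma cyclic_chain_sum_le T (idx : nat -> nat) : (0 < p)%N ->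
  (forall k, (k < T)%N -> (idx k < p)%N) ->
  (forall k, (k.+1 < T)%N -> h (idx k.+1) = h ((idx k).+1 %% p)%N) ->
  \sum_(k < T) g (idx k) <= (T%:R + p%:R - 1) * c.
Proof.
case: T => [|T] p_gt0 idx_lt chain.
  by rewrite big_ord0 add0r mulr_ge0 // subr_ge0 ler1n.
rewrite cyclic_chain_telescope => [|k|k]; last 2 first.
- by move=> kT; apply: idx_lt.
- by move=> kT; apply: chain.
have := cyclic_storage_oscillation (ltn_pmod (idx T).+1 p_gt0) (idx_lt 0%N isT).
lra.
Qed.

End CyclicStorage.

Section OptimalOrbit.
Variables (R : realType) (n m : nat).
Variables (f : 'rV[R]_n -> 'rV[R]_m -> 'rV[R]_n) (ell : 'rV[R]_n -> 'rV[R]_m -> R).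
Variables (X : set 'rV[R]_n) (U : set 'rV[R]_m).
Variables (p : nat) (Pi : nat -> 'rV[R]_n * 'rV[R]_m).
Hypothesis Pi_feas : feas_orbit f X U p Pi.

Lemma sum_orbit_cost : \sum_(i < p) ell (Pi i).1 (Pi i).2 = p%:R * avg_cost ell p Pi.
Proof.
have [p_gt0 _] := Pi_feas.
by rewrite /avg_cost mulrA divff ?mul1r // pnatr_eq0 -lt0n.
Qed.

Lemma avg_cost_ge0 : (forall x u, X x -> U u -> 0 <= ell x u) -> 0 <= avg_cost ell p Pi.
Proof.
move=> ell_ge0; have [p_gt0 [Pi_in _]] := Pi_feas.
rewrite /avg_cost mulr_ge0 ?invr_ge0 ?ler0n //.
by apply: sumr_ge0 => i _; have [XPi UPi] := Pi_in i (ltn_ord i); exact: ell_ge0.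
Qed.

Lemma orbit_stage_cost (lam : 'rV[R]_n -> R) :
  (forall x u, X x -> U u -> X (f x u) ->
    0 <= ell x u - avg_cost ell p Pi + lam x - lam (f x u)) ->
  forall i, (i < p)%N ->
    ell (Pi i).1 (Pi i).2 = avg_cost ell p Pi + lam (Pi (i.+1 %% p)%N).1 - lam (Pi i).1.
Proof.
move=> diss; have [p_gt0 [Pi_in Pi_next]] := Pi_feas.
apply: (@cyclic_dissipation_eq _ p (fun i => ell (Pi i).1 (Pi i).2)
  (fun i => lam (Pi i).1) _ sum_orbit_cost) => i ip.
have [XPi UPi] := Pi_in i ip.
have XPi_next := (Pi_in _ (ltn_pmod i.+1 p_gt0)).1; rewrite Pi_next // in XPi_next.
by have := diss _ _ XPi UPi XPi_next; rewrite -Pi_next //; lra.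
Qed.

End OptimalOrbit.

Section NearOrbitCost.
Variables (R : realType) (n m : nat).
Local Notation st := 'rV[R]_n.
Local Notation inp := 'rV[R]_m.
Variables (f : st -> inp -> st) (ell : st -> inp -> R) (X : set st) (U : set inp).
Variables (p : nat) (Pi : nat -> st * inp) (L : R).
Hypothesis Pi_feas : feas_orbit f X U p Pi.
Hypothesis f_cont : {within X `*` U, continuous (fun z : st * inp => f z.1 z.2)}.
Hypothesis ell_cont : {within X `*` U, continuous (fun z : st * inp => ell z.1 z.2)}.
Hypothesis ell_ge0 : forall x u, X x -> U u -> 0 <= ell x u.
Hypothesis ell_le : forall x u, X x -> U u -> ell x u <= L.

Lemma orbit_tracking : exists2 d, 0 < d & forall i j x u, (i < p)%N -> (j < p)%N ->
  X x -> U u -> pnorm (x - (Pi i).1) (u - (Pi i).2) < d -> `|f x u - (Pi j).1| < d ->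
  (Pi j).1 = (Pi (i.+1 %% p)%N).1.
Proof.
have [p_gt0 [Pi_in Pi_next]] := Pi_feas.
have [s s_gt0 separated] := @finite_points_separated _ _ p (fun i => (Pi i).1).
have s2_gt0 : 0 < s / 2 by rewrite divr_gt0.
have [r r_gt0 f_near] : exists2 r, 0 < r & forall i, (i < p)%N -> forall x u, X x -> U u ->
    pnorm (x - (Pi i).1) (u - (Pi i).2) < r -> `|f x u - f (Pi i).1 (Pi i).2| < s / 2.
  apply: (@common_pos_radius R p (fun i r => forall x u, X x -> U u ->
    pnorm (x - (Pi i).1) (u - (Pi i).2) < r -> `|f x u - f (Pi i).1 (Pi i).2| < s / 2)).
    by move=> i r r' _ r'r near_r x u Xx Uu xu_near; apply: near_r (lt_le_trans xu_near r'r).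
  move=> i ip; have [XPi UPi] := Pi_in i ip.
  exact: within_continuous_pnorm_ball f_cont XPi UPi s2_gt0.
have d_le_r : Num.min r (s / 2) <= r by rewrite ge_min lexx.
have d_le_s2 : Num.min r (s / 2) <= s / 2 by rewrite ge_min lexx orbT.
exists (Num.min r (s / 2)) => [|i j x u ip jp Xx Uu xu_near fxu_near].
  by rewrite lt_min r_gt0 s2_gt0.
apply/eqP; apply: contraT => Pij.
have := separated j jp _ (ltn_pmod i.+1 p_gt0) Pij.
have := f_near i ip x u Xx Uu (lt_le_trans xu_near d_le_r).
rewrite -Pi_next //.
have := ler_distD (f x u) (Pi j).1 (Pi (i.+1 %% p)%N).1.
rewrite distrC in fxu_near; lra.
Qed.

Definition orbit_nbhd : set (nat * (st * inp)) :=
  [set t | (t.1 < p)%N /\ (X `*` U) t.2].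

Definition orbit_dev (t : nat * (st * inp)) : R :=
  ell t.2.1 t.2.2 - ell (Pi t.1).1 (Pi t.1).2.

Definition orbit_gap (t : nat * (st * inp)) : R :=
  pnorm (t.2.1 - (Pi t.1).1) (t.2.2 - (Pi t.1).2).

Definition orbit_modulus : R -> R := modulus orbit_nbhd orbit_dev orbit_gap.

Lemma orbit_gap_ge0 t : 0 <= orbit_gap t.
Proof. exact: normr_ge0. Qed.

Lemma orbit_dev_le t : orbit_nbhd t -> orbit_dev t <= L.
Proof.
case=> ip [Xx Uu]; have [_ [Pi_in _]] := Pi_feas; have [XPi UPi] := Pi_in _ ip.
by have := ell_le Xx Uu; have := ell_ge0 XPi UPi; rewrite /orbit_dev; lra.
Qed.

Lemma orbit_dev_small eta : 0 < eta ->
  exists2 d, 0 < d & forall t, orbit_nbhd t -> orbit_gap t < d -> orbit_dev t <= eta.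
Proof.
move=> eta_gt0; have [_ [Pi_in _]] := Pi_feas.
have [d d_gt0 ell_near] : exists2 d, 0 < d & forall i, (i < p)%N -> forall x u, X x -> U u ->
    pnorm (x - (Pi i).1) (u - (Pi i).2) < d -> `|ell x u - ell (Pi i).1 (Pi i).2| < eta.
  apply: (@common_pos_radius R p (fun i d => forall x u, X x -> U u ->
    pnorm (x - (Pi i).1) (u - (Pi i).2) < d -> `|ell x u - ell (Pi i).1 (Pi i).2| < eta)).
    by move=> i d d' _ d'd near_d x u Xx Uu xu_near; apply: near_d (lt_le_trans xu_near d'd).
  move=> i ip; have [XPi UPi] := Pi_in i ip.
  exact: within_continuous_pnorm_ball ell_cont XPi UPi eta_gt0.
exists d => // [[i [x u]]] [/= ip [Xx Uu]] gap_lt.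
exact/ltW/(le_lt_trans (ler_norm _))/ell_near.
Qed.

Lemma orbit_modulus_continuous : continuous orbit_modulus.
Proof. exact: modulus_continuous orbit_gap_ge0 orbit_dev_le orbit_dev_small. Qed.

Lemma ell_le_orbit_modulus i x u e : (i < p)%N -> X x -> U u ->
  pnorm (x - (Pi i).1) (u - (Pi i).2) <= e ->
  ell x u <= ell (Pi i).1 (Pi i).2 + orbit_modulus e.
Proof.
move=> ip Xx Uu gap_le.
have near : orbit_nbhd (i, (x, u)) by split.
have := dev_le_modulus orbit_gap_ge0 orbit_dev_le orbit_dev_small near gap_le.
by rewrite /orbit_modulus /orbit_dev /=; lra.
Qed.

Variables (lam : st -> R) (c : R).
Hypothesis c_ge0 : 0 <= c.
Hypothesis orbit_cost : forall i, (i < p)%N ->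
  ell (Pi i).1 (Pi i).2 = c + lam (Pi (i.+1 %% p)%N).1 - lam (Pi i).1.

Lemma near_orbit_cost_le : exists2 d, 0 < d & forall e T xh uh, e < d ->
  admissible f X U T xh uh ->
  (forall k, (k < T)%N -> orbit_dist p Pi (traj f uh xh k) (uh k) <= e) ->
  \sum_(k < T) ell (traj f uh xh k) (uh k)
    <= (T%:R + p%:R - 1) * c + T%:R * orbit_modulus e.
Proof.
have [p_gt0 [Pi_in _]] := Pi_feas.
have [d d_gt0 tracking] := orbit_tracking.
exists d => // e T xh uh e_lt [uh_in traj_in] traj_near.
have /choice[idx idxP] : forall k, exists i, (k < T)%N ->
    (i < p)%N /\ pnorm (traj f uh xh k - (Pi i).1) (uh k - (Pi i).2) <= e.
  move=> k; have [kT | _] := ltnP k T; last by exists 0%N.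
  have [i ip gap] := orbit_dist_attained Pi (traj f uh xh k) (uh k) p_gt0.
  by exists i => _; rewrite gap traj_near.
have sum_le : \sum_(k < T) ell (traj f uh xh k) (uh k)
    <= \sum_(k < T) ell (Pi (idx k)).1 (Pi (idx k)).2 + T%:R * orbit_modulus e.
  rewrite -[T in T%:R]card_ord mulr_natl -sumr_const -big_split /=.
  apply: ler_sum => k _; have [ip gap] := idxP k (ltn_ord k).
  exact: ell_le_orbit_modulus ip (traj_in k (ltnW (ltn_ord k))) (uh_in k (ltn_ord k)) gap.
have orbit_ge0 i : (i < p)%N -> 0 <= ell (Pi i).1 (Pi i).2.
  by move=> ip; have [XPi UPi] := Pi_in i ip; exact: ell_ge0.
have := @cyclic_chain_sum_le _ p _ (fun i => lam (Pi i).1) c orbit_ge0 c_ge0 orbit_cost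
  T idx p_gt0 (fun k kT => (idxP k kT).1).
suff /[swap]/[apply] : forall k, (k.+1 < T)%N ->
    lam (Pi (idx k.+1)).1 = lam (Pi ((idx k).+1 %% p)%N).1 by lra.
move=> k kT; have kT' := ltnW kT; congr lam.
have [ik gapk] := idxP k kT'; have [ik1 gapk1] := idxP k.+1 kT.
apply: tracking ik ik1 (traj_in k (ltnW kT')) (uh_in k kT') (le_lt_trans gapk e_lt) _.
exact: le_lt_trans (le_trans (norml_le_pnorm _ _) gapk1) e_lt.
Qed.

Lemma exists_Kinf_cost_bound : exists alpha1 : R -> R, Kinf alpha1 /\
  forall eps, 0 < eps -> forall T xh uh, admissible f X U T xh uh ->
  (forall k, (k < T)%N -> orbit_dist p Pi (traj f uh xh k) (uh k) <= eps) ->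
  \sum_(k < T) ell (traj f uh xh k) (uh k)
    <= (T%:R + p%:R - 1) * c + T%:R * alpha1 eps.
Proof.
have [p_gt0 [Pi_in _]] := Pi_feas.
have L_ge0 : 0 <= L.
  by have [XPi UPi] := Pi_in 0%N p_gt0; exact: le_trans (ell_ge0 XPi UPi) (ell_le XPi UPi).
have [d d_gt0 near_cost] := near_orbit_cost_le.
(* With slope [(L + 1) / d] the linear part exceeds [L] as soon as [eps >= d],
   where tracking is unavailable and only the bound [ell <= L] is used. *)
have slope_gt0 : 0 < (L + 1) / d by rewrite divr_gt0 // ltr_wpDl.
exists (fun e => orbit_modulus e + (L + 1) / d * e); split.
  apply: Kinf_add_linear slope_gt0; first exact: orbit_modulus_continuous.
    exact: (le_modulus orbit_gap_ge0 orbit_dev_le).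
  exact: (modulus_eq0 orbit_gap_ge0 orbit_dev_le (lexx 0)).
move=> e e_gt0 T xh uh [uh_in traj_in] traj_near.
have mod_ge0 : 0 <= orbit_modulus e by apply: (modulus_ge0 _ orbit_dev_le).
have T_ge0 : 0 <= T%:R :> R := ler0n _ T.
have lin_ge0 : 0 <= T%:R * ((L + 1) / d * e).
  by apply: mulr_ge0 => //; apply: mulr_ge0; apply: ltW.
rewrite mulrDr; have [e_lt | e_ge] := ltP e d.
  by have := near_cost e T xh uh e_lt (conj uh_in traj_in) traj_near; lra.
have sum_le : \sum_(k < T) ell (traj f uh xh k) (uh k) <= T%:R * L.
  rewrite -[T in T%:R]card_ord mulr_natl -sumr_const; apply: ler_sum => k _.
  exact: ell_le (traj_in k (ltnW (ltn_ord k))) (uh_in k (ltn_ord k)).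
have : L <= (L + 1) / d * e by rewrite mulrAC ler_pdivlMr //; nra.
move/(ler_wpM2l T_ge0) => L_le.
have : 0 <= (T%:R + p%:R - 1) * c by rewrite mulr_ge0 // -addrA addr_ge0 // subr_ge0 ler1n.
have : 0 <= T%:R * orbit_modulus e by rewrite mulr_ge0.
lra.
Qed.

End NearOrbitCost.

Theorem lemma24 (R : realType) (n m : nat)
  (f : 'rV[R]_n -> 'rV[R]_m -> 'rV[R]_n) (ell : 'rV[R]_n -> 'rV[R]_m -> R)
  (X : set 'rV[R]_n) (U : set 'rV[R]_m)
  (pstar : nat) (Pistar : nat -> 'rV[R]_n * 'rV[R]_m)
  (* standing assumptions *)
  (ell_ge0 : forall x u, X x -> U u -> 0 <= ell x u)
  (Pistar_feas : feas_orbit f X U pstar Pistar)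
  (Pistar_opt : avg_cost ell pstar Pistar = ell_star f X U ell)
  (* (A1) *)
  (A1_f : {within X `*` U, continuous (fun z : 'rV[R]_n * 'rV[R]_m => f z.1 z.2)})
  (A1_ell : {within X `*` U, continuous (fun z : 'rV[R]_n * 'rV[R]_m => ell z.1 z.2)})
  (A1_X : compact X) (A1_U : compact U)
  (* (A3) *)
  (A3 : exists (lam : 'rV[R]_n -> R) (lambar : R) (alpha : R -> R),
     (forall x, X x -> `|lam x| <= lambar) /\ Kinf alpha /\
     (forall x u, X x -> U u -> X (f x u) ->
        ell x u - ell_star f X U ell + lam x - lam (f x u)
          >= alpha (orbit_dist pstar Pistar x u))) :
  exists alpha1 : R -> R, Kinf alpha1 /\
    forall (eps : R), 0 < eps ->
    forall (T : nat) (xh : 'rV[R]_n) (uh : nat -> 'rV[R]_m),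
      X xh -> admissible f X U T xh uh ->
      (forall k, (k < T)%N -> orbit_dist pstar Pistar (traj f uh xh k) (uh k) <= eps) ->
      \sum_(k < T) ell (traj f uh xh k) (uh k)
        <= (T%:R + pstar%:R - 1) * ell_star f X U ell + T%:R * alpha1 eps.
Proof.
have [lam [_ [alpha [_ [alpha_Kinf diss]]]]] := A3.
rewrite -Pistar_opt in diss *.
have orbit_cost := orbit_stage_cost Pistar_feas (fun x u Xx Uu Xf =>
  le_trans (Kinf_ge0 alpha_Kinf (orbit_dist_ge0 _ _ x u)) (diss x u Xx Uu Xf)).
have [L ell_le] := compact_within_continuous_ub (compact_setX A1_X A1_U) A1_ell.
have [alpha1 [alpha1_Kinf cost_le]] := exists_Kinf_cost_bound Pistar_feas A1_f A1_ell
  ell_ge0 (fun x u Xx Uu => ell_le (x, u) (conj Xx Uu))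
  (avg_cost_ge0 Pistar_feas ell_ge0) orbit_cost.
by exists alpha1; split=> // eps eps_gt0 T xh uh _; exact: cost_le.
Qed.
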